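(* Let $X$ be a finite set with $d=|X|\ge2$ and let $U$ be a clopen subset of $X^\omega$. If $U=\bigsqcup_{i=1}^n v_iX^\omega$ with $v_i\in X^*$, then the residue of $n$ modulo $d-1$ does not depend on the decomposition; denote it $m(U)\in\mathbb{Z}/(d-1)\mathbb{Z}$. For non-empty proper clopen subsets $U_1,U_2\subset X^\omega$ the following are equivalent: (1) $U_1,U_2$ lie in one $\mathcal{V}_X$-orbit; (2) $U_1,U_2$ lie in one $\mathcal{V}_X'$-orbit; (3) $m(U_1)=m(U_2)$.
   Context: $X^*$ is the set of finite words over $X$, $X^\omega$ the space of right-infinite sequences with the product topology, $vX^\omega$ the set of sequences beginning with $v$. A complete antichain is a finite set $A\subset X^*$ of words, none a prefix of another, with $X^\omega=\bigsqcup_{v\in A}vX^\omega$. The Higman–Thompson group $\mathcal{V}_X$ is the group of homeomorphisms $g$ of $X^\omega$ for which there are complete antichains $A_1,A_2$ and a bijection $\alpha:A_1\to A_2$ with $g(vw)=\alpha(v)w$ for all $v\in A_1$, $w\in X^\omega$. $\mathcal{V}_X'$ is its commutator subgroup. *)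

From mathcomp Require Import all_boot.
Set Implicit Arguments. Unset Strict Implicit. Unset Printing Implicit Defensive.

Section Cantor.
Variable X : finType.

Definition pt := nat -> X.
Definition subset_pt := pt -> Prop.

Definition cyl (v : seq X) (x : pt) : Prop := mkseq x (size v) = v.

Definition cat_inf (v : seq X) (w : pt) : pt :=
  fun n => if n < size v then nth (w 0) v n else w (n - size v).

(* product topology on X^omega *)
Definition is_open (U : subset_pt) : Prop :=
  forall x, U x -> exists n, forall y, mkseq y n = mkseq x n -> U y.
Definition is_clopen (U : subset_pt) : Prop :=
  is_open U /\ is_open (fun x => ~ U x).

Definition continuous (g : pt -> pt) : Prop :=
  forall x n, exists m, forall y, mkseq y m = mkseq x m ->
    mkseq (g y) n = mkseq (g x) n.

Definition homeo (g : pt -> pt) : Prop :=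
  continuous g /\ exists h : pt -> pt, continuous h /\
    (forall x, h (g x) = x) /\ (forall x, g (h x) = x).

(* U = disjoint union of the cylinders v_i X^omega, v_i the entries of vs
   (n = size vs) *)
Definition decomp (U : subset_pt) (vs : seq (seq X)) : Prop :=
  (forall x, U x <-> exists2 v, v \in vs & cyl v x) /\
  (forall i j, i < j < size vs -> forall x,
      ~ (cyl (nth [::] vs i) x /\ cyl (nth [::] vs j) x)).

Definition complete_antichain (A : seq (seq X)) : Prop :=
  uniq A /\
  (forall u v, u \in A -> v \in A -> u != v -> ~~ prefix u v) /\
  (forall x, exists2 v, v \in A & cyl v x).

(* Higman--Thompson group V_X; the bijection alpha : A1 -> A2 sends the
   i-th entry of A1 to the i-th entry of A2 *)
Definition inV (g : pt -> pt) : Prop :=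
  homeo g /\ exists A1 A2 : seq (seq X),
    [/\ complete_antichain A1, complete_antichain A2, size A1 = size A2 &
        forall i, i < size A1 -> forall w : pt,
          g (cat_inf (nth [::] A1 i) w) = cat_inf (nth [::] A2 i) w].

(* commutator subgroup V_X' : finite products of commutators
   [a,b] = a^-1 b^-1 a b with a, b in V_X (this set is the subgroup
   generated by commutators since [a,b]^-1 = [b,a]) *)
Inductive inVcomm : (pt -> pt) -> Prop :=
| inVcomm_id : inVcomm (fun x => x)
| inVcomm_mul : forall g a a' b b',
    inVcomm g -> inV a -> inV b ->
    (forall x, a' (a x) = x) -> (forall x, a (a' x) = x) ->
    (forall x, b' (b x) = x) -> (forall x, b (b' x) = x) ->
    inVcomm (fun x => g (a' (b' (a (b x))))).

Definition same_orbit (G : (pt -> pt) -> Prop) (U1 U2 : subset_pt) : Prop :=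
  exists g, G g /\ forall y, U2 y <-> exists2 x, U1 x & g x = y.

Definition nonempty_proper (U : subset_pt) : Prop :=
  (exists x, U x) /\ (exists x, ~ U x).

End Cantor.

(* Write d = |X| >= 2.  A clopen set U is decided on all words of some uniform
   length N (a König-type compactness argument), so U is the disjoint union of
   the cylinders of its level-N words.  For any decomposition U = ⊔ v_i X^ω and
   N larger than all |v_i|, the number of level-N words below U equals
   Σ d^(N - |v_i|) ≡ n (mod d-1); hence n mod (d-1) is an invariant m(U).

   Elements of V_X are exactly the invertible maps that rewrite a uniform-length
   prefix (and so do their inverses); this class is closed under composition and
   inversion, which gives V_X' ⊆ V_X, i.e. (2) => (1).  Pushing the level-N
   decomposition of U1 through such a g gives a decomposition of U2 with the same
   number of pieces, which proves (1) => (3).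

   For (3) => (2): the swap of two disjoint cylinders is in V_X, so the 3-cycle
   p -> q -> r -> p of three disjoint cylinders, a commutator of two swaps, is in
   V_X'.  Moving cylinders one at a time with such 3-cycles, every non-empty
   proper U with n pieces is V_X'-equivalent to a "comb" c a^j b (j < n); the
   stem c can be changed at will, and refining the last tooth replaces n by
   n + d - 1.  Two combs whose sizes agree mod d-1 are therefore equivalent. *)
From Pilot Require Import Defs.
From mathcomp Require Import all_boot.
From Stdlib Require Import FunctionalExtensionality ClassicalEpsilon Classical.
Set Implicit Arguments. Unset Strict Implicit. Unset Printing Implicit Defensive.

Section Cylinders.
Variable X : finType.
Local Notation pt := (pt X).
Local Notation cyl := (@cyl X).
Local Notation cat_inf := (@cat_inf X).
Implicit Types (u v s t : seq X) (w x y : pt).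

Definition shift n x : pt := fun m => x (n + m).

Lemma mkseq_cat_inf u w n : n <= size u -> mkseq (cat_inf u w) n = take n u.
Proof.
move=> hn; apply: (@eq_from_nth _ (w 0)).
  by rewrite size_mkseq size_take_min; apply/esym/minn_idPl.
move=> i; rewrite size_mkseq => hi.
by rewrite nth_mkseq // nth_take // /Defs.cat_inf (leq_trans hi hn).
Qed.

Lemma cyl_cat_inf v u w : size v <= size u -> cyl v (cat_inf u w) <-> prefix v u.
Proof.
move=> h; rewrite /Defs.cyl mkseq_cat_inf // prefixE.
by split=> [->|/eqP].
Qed.

Lemma prefix_cyl v u w : prefix v u -> cyl v (cat_inf u w).
Proof.
move=> h; apply/cyl_cat_inf => //.
by move: h; rewrite prefixE => /eqP <-; rewrite size_take_min geq_minr.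
Qed.

Lemma cyl_cat_inf_self u w : cyl u (cat_inf u w).
Proof. by apply: prefix_cyl; rewrite prefixE take_size. Qed.

Lemma cat_inf_mkseq x n : cat_inf (mkseq x n) (shift n x) = x.
Proof.
apply: functional_extensionality => m; rewrite /Defs.cat_inf size_mkseq /shift.
by case: ltnP => h; [rewrite nth_mkseq | rewrite subnKC].
Qed.

Lemma cyl_split v x : cyl v x -> x = cat_inf v (shift (size v) x).
Proof. by rewrite /Defs.cyl => h; rewrite -{1}h cat_inf_mkseq. Qed.

Lemma cat_inf_cat s t w : cat_inf (s ++ t) w = cat_inf s (cat_inf t w).
Proof.
apply: functional_extensionality => m; rewrite /Defs.cat_inf size_cat.
case: (ltnP m (size s)) => h1.
  by rewrite (ltn_addr _ h1) nth_cat h1; apply: set_nth_default.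
rewrite /=; case: (ltnP m (size s + size t)) => h2.
  rewrite nth_cat ltnNge h1 /= ltn_subLR // h2.
  by apply: set_nth_default; rewrite ltn_subLR.
by rewrite ltnNge leq_subRL // h2 /= subnDA.
Qed.

Lemma shift_cat_inf u w : shift (size u) (cat_inf u w) = w.
Proof.
apply: functional_extensionality => m; rewrite /shift /Defs.cat_inf.
by rewrite ltnNge leq_addr /= addKn.
Qed.

Lemma cat_inf_inj u u' w w' : size u = size u' -> cat_inf u w = cat_inf u' w' ->
  u = u' /\ w = w'.
Proof.
move=> hs he.
have hu : u = u'.
  have := cyl_cat_inf_self u w; rewrite he => /cyl_cat_inf.
  by rewrite hs => /(_ (leqnn _)); rewrite prefixE hs take_size => /eqP.
by split=> //; have := shift_cat_inf u w; rewrite he hs shift_cat_inf.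
Qed.

Lemma cyl_nth v x i a : cyl v x -> i < size v -> x i = nth a v i.
Proof. by rewrite /Defs.cyl => <-; rewrite size_mkseq => h; rewrite nth_mkseq. Qed.

Lemma cyl_prefix v u x : prefix v u -> cyl u x -> cyl v x.
Proof. by move=> hp hu; rewrite (cyl_split hu); exact: prefix_cyl. Qed.

Lemma cyl_rcons s e x : cyl s x -> x (size s) = e -> cyl (rcons s e) x.
Proof. by rewrite /Defs.cyl size_rcons mkseqS => -> ->. Qed.

Lemma mkseq_eq_nth x y m : mkseq y m = mkseq x m -> forall i, i < m -> y i = x i.
Proof.
by move=> h i hi; have := congr1 (fun s => nth (x 0) s i) h; rewrite /= !nth_mkseq.
Qed.

Lemma nth_eq_mkseq x y m : (forall i, i < m -> y i = x i) -> mkseq y m = mkseq x m.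
Proof.
move=> h; apply/eq_in_map => i.
by rewrite mem_iota add0n => /andP [_ /h].
Qed.

Definition cyl_disjoint p q := forall x, ~ (cyl p x /\ cyl q x).

Lemma cyl_disjoint_sym p q : cyl_disjoint p q -> cyl_disjoint q p.
Proof. by move=> h x [hq hp]; apply: (h x). Qed.

Lemma cyl_disjoint_prefix p q p' q' : cyl_disjoint p q ->
  prefix p p' -> prefix q q' -> cyl_disjoint p' q'.
Proof. by move=> h h1 h2 x [a b]; apply: (h x); split; apply: cyl_prefix; eauto. Qed.

Lemma cyl_disjoint_nth p q i a : i < size p -> i < size q ->
  nth a p i != nth a q i -> cyl_disjoint p q.
Proof.
move=> hp hq hne x [cp cq]; move: hne.
by rewrite -(cyl_nth _ cp hp) -(cyl_nth _ cq hq) eqxx.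
Qed.

End Cylinders.

Section Words.
Variable X : finType.

Fixpoint words (n : nat) : seq (seq X) :=
  if n is n'.+1 then [seq x :: w | x <- enum X, w <- words n'] else [:: [::]].

Lemma mem_words u n : (u \in words n) = (size u == n).
Proof.
elim: n u => [|n IH] u /=; first by case: u.
apply/allpairsP/idP => [[[x w] [_ /= hw ->]]|].
  by move: hw; rewrite IH /= eqSS.
case: u => [|x w] //=; rewrite eqSS => h.
by exists (x, w); rewrite /= mem_enum IH.
Qed.

Lemma uniq_words n : uniq (words n).
Proof.
elim: n => [|n IH] //=; apply: allpairs_uniq => //; first exact: enum_uniq.
by move=> [x w] [x' w'] _ _ /= [-> ->].
Qed.

Lemma size_words n : size (words n) = #|X| ^ n.
Proof. by elim: n => [|n IH] //=; rewrite size_allpairs IH cardE expnS. Qed.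

Lemma count_prefix_allpairs (a : X) v (s : seq X) (t : seq (seq X)) :
  count (prefix (a :: v)) [seq x :: w | x <- s, w <- t] =
  count (pred1 a) s * count (prefix v) t.
Proof.
elim: s => [|x s IH] //; rewrite allpairs_cons count_cat IH count_map mulnDl /=.
congr (_ + _); case: eqP => [->|h].
  by rewrite mul1n; apply: eq_count => w /=; rewrite eqxx.
rewrite mul0n; apply/eqP; rewrite eqn0Ngt -has_count; apply/hasPn => w _ /=.
by case: eqP => // /esym.
Qed.

Lemma count_prefix_words v n : size v <= n ->
  count (prefix v) (words n) = #|X| ^ (n - size v).
Proof.
elim: n v => [|n IH] [|a v] //= hv.
  rewrite subn0 -size_words; apply/eqP; rewrite -all_count.
  by apply/allP => -[].
rewrite count_prefix_allpairs IH // subSS.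
by rewrite count_uniq_mem ?enum_uniq // mem_enum mul1n.
Qed.

Lemma words_complete_antichain N : complete_antichain (words N).
Proof.
split; first exact: uniq_words.
split.
  move=> u v; rewrite !mem_words => /eqP hu /eqP hv huv; apply/negP.
  by rewrite prefixE hu -hv take_size => /eqP h; rewrite h eqxx in huv.
move=> x; exists (mkseq x N); first by rewrite mem_words size_mkseq.
by rewrite /Defs.cyl size_mkseq.
Qed.

End Words.

Section Invariant.
Variable X : finType.
Variable x0 : X.
Local Notation w0 := (fun _ : nat => x0).

Lemma count_below_disjoint (vs : seq (seq X)) N :
  (forall i j, i < j < size vs -> forall x,
      ~ (cyl (nth [::] vs i) x /\ cyl (nth [::] vs j) x)) ->
  (forall v, v \in vs -> size v <= N) ->
  count (fun u => has (fun v => prefix v u) vs) (words X N) =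
  sumn [seq #|X| ^ (N - size v) | v <- vs].
Proof.
elim: vs => [|v vs IH] hd hs /=.
  by apply/eqP; rewrite eqn0Ngt -has_count; apply/hasPn.
rewrite -IH; first last.
- by move=> w hw; apply: hs; rewrite in_cons hw orbT.
- by move=> i j /andP [hij hj] x; apply: (hd i.+1 j.+1); rewrite /= !ltnS hij.
rewrite -(count_prefix_words (hs v (mem_head _ _))).
set below := fun u => has (fun v => prefix v u) vs.
have := count_predUI (prefix v) below (words X N).
suff -> : count (predI (prefix v) below) (words X N) = 0 by rewrite addn0 => <-.
apply/eqP; rewrite eqn0Ngt -has_count; apply/hasPn => u hu /=.
apply/negP => /andP [hp /hasP [v' /(nthP [::]) [j hj hj'] hp']].
apply: (hd 0 j.+1 _ (cat_inf u w0)); first by rewrite /= ltnS hj.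
by rewrite /= hj'; split; apply: prefix_cyl.
Qed.

(* d ≡ 1 (mod d-1), hence every d^k ≡ 1. *)
Lemma expn_card_mod k : #|X| ^ k = 1 %[mod #|X|.-1].
Proof.
have hX : 0 < #|X| by apply/card_gt0P; exists x0.
by rewrite -{1}(prednK hX) -addn1 -{1}(mul1n #|X|.-1) modnMDXl exp1n.
Qed.

Lemma sumn_expn_mod (vs : seq (seq X)) N :
  sumn [seq #|X| ^ (N - size v) | v <- vs] = size vs %[mod #|X|.-1].
Proof.
elim: vs => [|v vs IH] //=.
by rewrite -modnDm IH expn_card_mod modnDm add1n.
Qed.

(* Σ |v| bounds the length of every member, giving a common refinement depth. *)
Lemma size_le_sumn (vs : seq (seq X)) v : v \in vs -> size v <= sumn (map size vs).
Proof.
elim: vs => [|w vs IH] //=; rewrite in_cons => /orP [/eqP ->|h].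
  exact: leq_addr.
exact: leq_trans (IH h) (leq_addl _ _).
Qed.

Lemma decomp_below (U : subset_pt X) vs u : decomp U vs ->
  (forall v, v \in vs -> size v <= size u) ->
  has (fun v => prefix v u) vs <-> U (cat_inf u w0).
Proof.
move=> [hU _] hs; split.
  by move=> /hasP [v hv hp]; apply/hU; exists v => //; apply: prefix_cyl.
move=> /hU [v hv hc]; apply/hasP; exists v => //.
by move: hc => /cyl_cat_inf; apply; apply: hs.
Qed.

Lemma decomp_size_mod (U : subset_pt X) vs1 vs2 : decomp U vs1 -> decomp U vs2 ->
  size vs1 = size vs2 %[mod #|X|.-1].
Proof.
move=> h1 h2; set N := sumn (map size (vs1 ++ vs2)).
have hs1 v : v \in vs1 -> size v <= N.
  by move=> hv; apply: size_le_sumn; rewrite mem_cat hv.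
have hs2 v : v \in vs2 -> size v <= N.
  by move=> hv; apply: size_le_sumn; rewrite mem_cat hv orbT.
rewrite -(sumn_expn_mod vs1 N) -(sumn_expn_mod vs2 N).
rewrite -(count_below_disjoint h1.2 hs1) -(count_below_disjoint h2.2 hs2).
congr (_ %% _); apply: eq_in_count => u; rewrite mem_words => /eqP hu.
have E1 := @decomp_below U vs1 u h1; have E2 := @decomp_below U vs2 u h2.
rewrite hu in E1 E2; have {}E1 := E1 hs1; have {}E2 := E2 hs2.
by apply/idP/idP => h; [apply/E2/E1 | apply/E1/E2].
Qed.

End Invariant.

Definition asb (P : Prop) : bool :=
  if excluded_middle_informative P then true else false.

Lemma asbP P : asb P <-> P.
Proof. by rewrite /asb; case: excluded_middle_informative. Qed.

Lemma asb_true (P : Prop) : P -> asb P = true.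
Proof. by rewrite /asb; case: excluded_middle_informative. Qed.
Lemma asb_false (P : Prop) : ~ P -> asb P = false.
Proof. by rewrite /asb; case: excluded_middle_informative. Qed.

Section Compactness.
Variable X : finType.
Local Notation pt := (pt X).
Implicit Types (U : subset_pt X) (u v s : seq X).

Definition determined U u :=
  (forall w, U (cat_inf u w)) \/ (forall w, ~ U (cat_inf u w)).

Lemma determined_cat U u s : determined U u -> determined U (u ++ s).
Proof. by case=> h; [left|right] => w; rewrite cat_inf_cat; apply: h. Qed.

Lemma determined_deeper U N : (forall u, size u = N -> determined U u) ->
  forall N' u, N <= N' -> size u = N' -> determined U u.
Proof.
move=> h N' u hN hu; rewrite -(cat_take_drop N u); apply/determined_cat/h.
by rewrite size_take_min hu; apply/minn_idPl.
Qed.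

Definition undetermined_below U u :=
  forall n, exists s, size s = n /\ ~ determined U (u ++ s).

(* Since X is finite, some one-letter extension stays undetermined below. *)
Lemma undetermined_below_rcons U u : undetermined_below U u ->
  exists x, undetermined_below U (rcons u x).
Proof.
move=> hb; apply: NNPP => hn.
have h1 x : exists n, forall s, size s = n -> determined U (rcons u x ++ s).
  apply: NNPP => hx; apply: hn; exists x => n.
  apply: NNPP => hy; apply: hx; exists n => s hs; apply: NNPP => hd.
  by apply: hy; exists s.
have [nf hnf] := ClassicalEpsilon.choice _ h1.
have [[|x s'] [//= [hs'] hd]] := hb (\max_(x : X) nf x).+1.
apply: hd; rewrite -cat_rcons -(cat_take_drop (nf x) s') catA.
apply/determined_cat/hnf; rewrite size_take_min hs'; apply/minn_idPl.
exact: (leq_bigmax x).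
Qed.

(* König's lemma: an undetermined root yields a point all of whose prefixes
   are undetermined below. *)
Lemma undetermined_branch U : undetermined_below U [::] ->
  exists x : pt, forall n, undetermined_below U (mkseq x n).
Proof.
move=> b0.
have [a _] : exists a : X, True.
  by have [[|a s] [//= _ _]] := b0 1; exists a.
have step u : exists x, undetermined_below U u -> undetermined_below U (rcons u x).
  case: (classic (undetermined_below U u)) => [/undetermined_below_rcons [x hx]|hb].
    by exists x.
  by exists a.
have [f hf] := ClassicalEpsilon.choice _ step.
pose fix pre n := if n is n'.+1 then rcons (pre n') (f (pre n')) else [::].
exists (fun n => f (pre n)) => n.
have -> : mkseq (fun n => f (pre n)) n = pre n.
  by elim: n => [|n IH] //; rewrite mkseqS IH.
by elim: n => [|n IH] //=; apply: hf.
Qed.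

Lemma clopen_uniform_depth U : is_clopen U ->
  exists N, forall u, size u = N -> determined U u.
Proof.
move=> [hO hC]; apply: NNPP => H.
have [|x hx] := @undetermined_branch U.
  move=> n; apply: NNPP => hn; apply: H; exists n => u hu; apply: NNPP => hd.
  by apply: hn; exists u.
suff [n hn] : exists n, determined U (mkseq x n).
  by have [s [/size0nil -> []]] := hx n 0; rewrite cats0.
have hcyl n w : mkseq (cat_inf (mkseq x n) w) n = mkseq x n.
  by rewrite mkseq_cat_inf ?size_mkseq // -{1}(size_mkseq x n) take_size.
by case: (classic (U x)) => [/hO|/hC] [n hn]; exists n; [left|right] => w;
  apply: hn; apply: hcyl.
Qed.

Variable x0 : X.
Local Notation w0 := (fun _ : nat => x0).

(* The level-N words of U: those whose cylinder meets U (tested at one point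
   of the cylinder). *)
Definition level U N := [seq u <- words X N | asb (U (cat_inf u w0))].

Lemma size_level U N u : u \in level U N -> size u = N.
Proof. by rewrite mem_filter mem_words => /andP [_ /eqP]. Qed.

Lemma uniq_level U N : uniq (level U N).
Proof. exact/filter_uniq/uniq_words. Qed.

Lemma level_decomp U N : (forall u, size u = N -> determined U u) ->
  decomp U (level U N).
Proof.
move=> hd; split.
  move=> x; split.
    move=> hx; exists (mkseq x N); last by rewrite /Defs.cyl size_mkseq.
    rewrite mem_filter mem_words size_mkseq eqxx andbT; apply/asbP.
    case: (hd (mkseq x N) (size_mkseq _ _)) => h; first exact: h.
    by case: (h (shift N x)); rewrite cat_inf_mkseq.
  move=> [v]; rewrite mem_filter mem_words => /andP [/asbP hv /eqP hs] hc.
  rewrite (cyl_split hc); case: (hd v hs) => h; first exact: h.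
  by case: (h w0).
move=> i j /andP [hij hj] x [hi' hj'].
have hi : i < size (level U N) by apply: ltn_trans hj.
have : nth [::] (level U N) i == nth [::] (level U N) j.
  move: hi' hj'; rewrite /Defs.cyl (size_level (mem_nth _ hi)).
  by rewrite (size_level (mem_nth _ hj)) => <- <-.
by rewrite nth_uniq ?uniq_level // (ltn_eqF hij).
Qed.

End Compactness.

Section PrefixMaps.
Variable X : finType.
Local Notation pt := (pt X).
Implicit Types (g h : pt -> pt) (u v s : seq X).

Definition rewrites_at g N (f : seq X -> seq X) :=
  forall u, size u = N -> forall w, g (cat_inf u w) = cat_inf (f u) w.
Definition prefix_map g := exists N f, rewrites_at g N f.

Lemma rewrites_at_deeper g N f N' : rewrites_at g N f -> N <= N' ->
  rewrites_at g N' (fun u => f (take N u) ++ drop N u).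
Proof.
move=> h hN u hu w; rewrite -{1}(cat_take_drop N u) !cat_inf_cat h //.
by rewrite size_take_min hu; apply/minn_idPl.
Qed.

Lemma prefix_map_id : prefix_map id.
Proof. by exists 0, id. Qed.

Lemma prefix_map_comp g h : prefix_map g -> prefix_map h -> prefix_map (g \o h).
Proof.
move=> [M [fg hg]] [N [fh hh]]; have hh' := rewrites_at_deeper hh (leq_addr M N).
exists (N + M), (fun u => let s := fh (take N u) ++ drop N u in
                          fg (take M s) ++ drop M s).
move=> u hu w; rewrite /= hh' // -{1}(cat_take_drop M (fh (take N u) ++ drop N u)).
rewrite !cat_inf_cat hg // size_take_min size_cat size_drop hu addKn.
by apply/minn_idPl; apply: leq_addl.
Qed.

(* A prefix map is continuous: the first n output letters depend on N + n
   input letters. *)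
Lemma prefix_map_continuous g : prefix_map g -> continuous g.
Proof.
move=> [N [f hf]] x n; exists (N + n) => y hy; have hl := mkseq_eq_nth hy.
have hxy : mkseq y N = mkseq x N.
  by apply: nth_eq_mkseq => i hi; apply: hl; apply: leq_trans hi (leq_addr _ _).
rewrite -(cat_inf_mkseq y N) -(cat_inf_mkseq x N) !hf ?size_mkseq // hxy.
apply: nth_eq_mkseq => i hi; rewrite /Defs.cat_inf; case: ltnP => // hi'.
  exact: set_nth_default.
rewrite /shift; apply: hl; rewrite ltn_add2l.
exact: leq_ltn_trans (leq_subr _ _) hi.
Qed.

Lemma antichain_prefix_map g A1 A2 : complete_antichain A1 -> size A1 <= size A2 ->
  (forall i, i < size A1 -> forall w,
     g (cat_inf (nth [::] A1 i) w) = cat_inf (nth [::] A2 i) w) ->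
  prefix_map g.
Proof.
move=> [_ [_ hc]] hs hg; exists (sumn (map size A1)).
pose i u := find (fun v => prefix v u) A1.
exists (fun u => nth [::] A2 (i u) ++ drop (size (nth [::] A1 (i u))) u).
move=> u hu w.
have hh : has (fun v => prefix v u) A1.
  have [v hv hcv] := hc (cat_inf u w); apply/hasP; exists v => //.
  by move/cyl_cat_inf: hcv; apply; rewrite hu; apply: size_le_sumn.
have hi : i u < size A1 by rewrite -has_find.
have hp : take (size (nth [::] A1 (i u))) u = nth [::] A1 (i u).
  by apply/eqP; rewrite -prefixE; apply: (nth_find [::] hh).
rewrite -{1}(cat_take_drop (size (nth [::] A1 (i u))) u) hp cat_inf_cat hg //.
by rewrite cat_inf_cat.
Qed.

Variable x0 : X.
Local Notation w0 := (fun _ : nat => x0).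

Lemma rewrite_image_complete_antichain g h N f :
  cancel g h -> cancel h g -> rewrites_at g N f ->
  complete_antichain (map f (words X N)).
Proof.
move=> hgh hhg hf; have ginj := can_inj hgh.
have sizeW u : u \in words X N -> size u = N by rewrite mem_words => /eqP.
split.
  rewrite map_inj_in_uniq ?uniq_words // => u v /sizeW hu /sizeW hv e.
  have := ginj (cat_inf u w0) (cat_inf v w0); rewrite !hf // e.
  by move=> /(_ erefl) /cat_inf_inj; rewrite hu hv => /(_ erefl) [].
split.
  move=> _ _ /mapP [u /sizeW su ->] /mapP [v /sizeW sv ->] hne; apply/negP.
  rewrite prefixE => /eqP hp.
  have e : g (cat_inf v w0) = g (cat_inf u (cat_inf (drop (size (f u)) (f v)) w0)).
    by rewrite hf // hf // -cat_inf_cat -{1}hp cat_take_drop.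
  move: (ginj _ _ e) => /cat_inf_inj; rewrite su sv => /(_ erefl) [huv _].
  by rewrite huv eqxx in hne.
move=> y; exists (f (mkseq (h y) N)).
  by apply: map_f; rewrite mem_words size_mkseq.
have ey : y = g (cat_inf (mkseq (h y) N) (shift N (h y))) by rewrite cat_inf_mkseq hhg.
by rewrite {2}ey hf ?size_mkseq //; apply: cyl_cat_inf_self.
Qed.

Lemma prefix_map_inV g h : cancel g h -> cancel h g ->
  prefix_map g -> prefix_map h -> inV g.
Proof.
move=> hgh hhg hg hh; split.
  split; first exact: prefix_map_continuous.
  by exists h; split; first exact: prefix_map_continuous.
have [N [f hf]] := hg.
exists (words X N), (map f (words X N)); split.
- exact: words_complete_antichain.
- exact: rewrite_image_complete_antichain hf.
- by rewrite size_map.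
- move=> i hi w; rewrite (nth_map [::]) // hf //.
  by have := mem_nth [::] hi; rewrite mem_words => /eqP.
Qed.

Definition invertible_prefix_map g :=
  exists h, [/\ cancel g h, cancel h g, prefix_map g & prefix_map h].

Lemma inV_invertible g : inV g -> invertible_prefix_map g.
Proof.
move=> [[_ [h [_ [hgh hhg]]]] [A1 [A2 [hA1 hA2 hs hg]]]]; exists h; split => //.
  by apply: (antichain_prefix_map hA1 _ hg); rewrite hs.
apply: (antichain_prefix_map (A2 := A1) hA2); first by rewrite hs.
by move=> i hi w; rewrite -(hgh (cat_inf (nth [::] A1 i) w)) hg // hs.
Qed.

Lemma invertible_prefix_map_inv g g' : invertible_prefix_map g ->
  cancel g g' -> cancel g' g -> invertible_prefix_map g'.
Proof.
move=> [h [h1 h2 h3 h4]] a1 a2.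
have -> : g' = h by apply: functional_extensionality => x; rewrite -{1}(h2 x) a1.
by exists g; split.
Qed.

Lemma invertible_prefix_map_comp g1 g2 : invertible_prefix_map g1 ->
  invertible_prefix_map g2 -> invertible_prefix_map (g1 \o g2).
Proof.
move=> [h1 [a1 b1 c1 d1]] [h2 [a2 b2 c2 d2]].
exists (h2 \o h1); split; try exact: prefix_map_comp.
- by move=> x /=; rewrite a1 a2.
- by move=> x /=; rewrite b2 b1.
Qed.

Lemma inVcomm_invertible g : inVcomm g -> invertible_prefix_map g.
Proof.
elim=> [|g0 a a' b b' _ IH ha hb a1 a2 b1 b2].
  by exists id; split => //; exact: prefix_map_id.
have [ga gb] := conj (inV_invertible ha) (inV_invertible hb).
have ga' := invertible_prefix_map_inv ga a1 a2.
have gb' := invertible_prefix_map_inv gb b1 b2.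
do 3 apply: invertible_prefix_map_comp => //.
exact: invertible_prefix_map_comp.
Qed.

Lemma inVcomm_inV g : inVcomm g -> inV g.
Proof.
by move=> /inVcomm_invertible [h [h1 h2 h3 h4]]; apply: (prefix_map_inV h1 h2).
Qed.

End PrefixMaps.

Section OrbitInvariant.
Variable X : finType.
Local Notation pt := (pt X).

Lemma rewrite_image_decomp g h N f (U1 U2 : subset_pt X) L :
  cancel g h -> rewrites_at g N f ->
  (forall y, U2 y <-> exists2 x, U1 x & g x = y) ->
  decomp U1 L -> uniq L -> (forall v, v \in L -> size v = N) ->
  decomp U2 (map f L).
Proof.
move=> hgh hf horb [hU1 hD1] hL hsz; have ginj := can_inj hgh.
have hfL v w : v \in L -> g (cat_inf v w) = cat_inf (f v) w.
  by move=> hv; apply: hf; apply: hsz.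
split=> [y|i j /andP [hij]].
  split.
    move=> /horb [x /hU1 [v hv hcv] <-]; exists (f v); first exact: map_f.
    by rewrite (cyl_split hcv) hfL //; apply: cyl_cat_inf_self.
  move=> [_ /mapP [u hu ->] hc]; apply/horb.
  exists (cat_inf u (shift (size (f u)) y)).
    by apply/hU1; exists u => //; apply: cyl_cat_inf_self.
  by rewrite hfL // -cyl_split.
rewrite size_map => hj y []; have hi : i < size L by apply: ltn_trans hj.
rewrite !(nth_map [::]) // => /cyl_split ei /cyl_split ej.
rewrite -hfL ?mem_nth // in ei; rewrite -hfL ?mem_nth // in ej.
move: (ginj _ _ (etrans (esym ei) ej)) => /cat_inf_inj.
rewrite (hsz _ (mem_nth _ hi)) (hsz _ (mem_nth _ hj)) => /(_ erefl) [/eqP].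
by rewrite nth_uniq // (ltn_eqF hij).
Qed.

Variable x0 : X.

Lemma inV_orbit_size_mod (U1 U2 : subset_pt X) vs1 vs2 :
  is_clopen U1 -> decomp U1 vs1 -> decomp U2 vs2 ->
  same_orbit (@inV X) U1 U2 -> size vs1 = size vs2 %[mod #|X|.-1].
Proof.
move=> hc1 hd1 hd2 [g [/inV_invertible [h [hgh _ [Ng [f hf]] _]] horb]].
have [N1 hN1] := clopen_uniform_depth hc1.
have hL : decomp U1 (level x0 U1 (Ng + N1)).
  by apply: level_decomp => u; apply: determined_deeper hN1 _ _ (leq_addl _ _).
have hd := rewrite_image_decomp hgh (rewrites_at_deeper hf (leq_addr N1 Ng)) horb
  hL (uniq_level _ _ _) (@size_level _ _ _ _).
by rewrite (decomp_size_mod x0 hd1 hL) (decomp_size_mod x0 hd2 hd) size_map.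
Qed.

End OrbitInvariant.

Section Swap.
Variable X : finType.
Local Notation pt := (pt X).
Implicit Types (p q r : seq X) (x : pt).

Definition swap p q x : pt :=
  if asb (cyl p x) then cat_inf q (shift (size p) x)
  else if asb (cyl q x) then cat_inf p (shift (size q) x) else x.

Lemma cyl_disjoint_notin p q x : cyl_disjoint p q -> cyl p x -> ~ cyl q x.
Proof. by move=> h hp hq; apply: (h x). Qed.

Variables (p q : seq X).
Hypothesis hpq : cyl_disjoint p q.

Lemma swap_p w : swap p q (cat_inf p w) = cat_inf q w.
Proof. by rewrite /swap asb_true ?shift_cat_inf //; apply: cyl_cat_inf_self. Qed.

Lemma swap_q w : swap p q (cat_inf q w) = cat_inf p w.
Proof.
have cq := cyl_cat_inf_self q w.
rewrite /swap asb_false; last by move=> cp; exact: (hpq (conj cp cq)).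
by rewrite asb_true ?shift_cat_inf //; apply: cyl_cat_inf_self.
Qed.

Lemma swap_out x : ~ cyl p x -> ~ cyl q x -> swap p q x = x.
Proof. by move=> h1 h2; rewrite /swap !asb_false. Qed.

Lemma swapK : involutive (swap p q).
Proof.
move=> x; case: (classic (cyl p x)) => [/cyl_split ->|h1].
  by rewrite swap_p swap_q.
case: (classic (cyl q x)) => [/cyl_split ->|h2].
  by rewrite swap_q swap_p.
by rewrite !swap_out.
Qed.

Lemma swap_prefix_map : prefix_map (swap p q).
Proof.
exists (size p + size q).
exists (fun u => if prefix p u then q ++ drop (size p) u
                 else if prefix q u then p ++ drop (size q) u else u).
move=> u hu w; case: ifP => [|h1].
  rewrite prefixE => /eqP h1.
  by rewrite -{1}(cat_take_drop (size p) u) h1 !cat_inf_cat swap_p.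
case: ifP => [|h2].
  rewrite prefixE => /eqP h2.
  by rewrite -{1}(cat_take_drop (size q) u) h2 !cat_inf_cat swap_q.
apply: swap_out.
  by move/cyl_cat_inf; rewrite hu leq_addr h1 => /(_ erefl).
by move/cyl_cat_inf; rewrite hu leq_addl h2 => /(_ erefl).
Qed.

Lemma swap_inV (x0 : X) : inV (swap p q).
Proof. exact: (prefix_map_inV x0 swapK swapK swap_prefix_map swap_prefix_map). Qed.

End Swap.

Section CommutatorOrbits.
Variable X : finType.
Variable x0 : X.
Local Notation pt := (pt X).
Implicit Types (p q r : seq X) (x : pt) (g : pt -> pt) (S : subset_pt X).

Definition comm_orbit S S' := same_orbit (@inVcomm X) S S'.

Lemma inVcomm_comp g1 g2 : inVcomm g1 -> inVcomm g2 -> inVcomm (g1 \o g2).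
Proof.
move=> h1; elim=> [|g a a' b b' _ IH ha hb a1 a2 b1 b2] //.
exact: (inVcomm_mul IH ha hb a1 a2 b1 b2).
Qed.

(* V_X' is closed under inverses: [a,b]^-1 = [b,a]. *)
Lemma inVcomm_inv g : inVcomm g ->
  exists g', [/\ inVcomm g', cancel g g' & cancel g' g].
Proof.
elim=> [|g0 a a' b b' _ [g' [hg' e1 e2]] ha hb a1 a2 b1 b2].
  by exists (fun x => x); split => //; exact: inVcomm_id.
exists (fun x => b' (a' (b (a (g' x))))); split.
- apply: (inVcomm_comp (g1 := fun x => b' (a' (b (a x))))) => //.
  exact (inVcomm_mul (inVcomm_id X) hb ha b1 b2 a1 a2).
- by move=> x; rewrite e1 a2 b2 a1 b1.
- by move=> x; rewrite b2 a2 b1 a1 e2.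
Qed.

Lemma comm_orbit_refl S : comm_orbit S S.
Proof.
exists (fun x => x); split; first exact: inVcomm_id.
by move=> y; split => [h|[x hx <-]] //; exists y.
Qed.

Lemma comm_orbit_trans S1 S2 S3 : comm_orbit S1 S2 -> comm_orbit S2 S3 ->
  comm_orbit S1 S3.
Proof.
move=> [g1 [h1 o1]] [g2 [h2 o2]]; exists (g2 \o g1); split.
  exact: inVcomm_comp.
move=> y; split.
  by move/o2 => [x /o1 [z hz <-] <-]; exists z.
by move=> [x hx <-]; apply/o2; exists (g1 x) => //; apply/o1; exists x.
Qed.

Lemma comm_orbit_sym S1 S2 : comm_orbit S1 S2 -> comm_orbit S2 S1.
Proof.
move=> [g [hg o]]; have [g' [hg' e1 e2]] := inVcomm_inv hg.
exists g'; split => // y; split.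
  by move=> hy; exists (g y); [apply/o; exists y | rewrite e1].
by move=> [x /o [z hz <-] <-]; rewrite e1.
Qed.

Lemma comm_orbit_ext S S' S'' : (forall x, S' x <-> S'' x) -> comm_orbit S S' ->
  comm_orbit S S''.
Proof. by move=> he [g [hg o]]; exists g; split => // y; rewrite -he; apply: o. Qed.

Lemma comm_orbit_preimage g g' S S' : inVcomm g -> cancel g' g ->
  (forall x, S' (g x) <-> S x) -> comm_orbit S S'.
Proof.
move=> hg e he; exists g; split => // y; split.
  by move=> hy; exists (g' y) => //; apply/he; rewrite e.
by move=> [x hx <-]; apply/he.
Qed.

(* The 3-cycle p -> q -> r -> p of disjoint cylinders, as the commutator of
   the swaps (p q) and (p r). *)
Definition cycle3 p q r x := swap p q (swap p r (swap p q (swap p r x))).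

Variables (p q r : seq X).
Hypotheses (hpq : cyl_disjoint p q) (hpr : cyl_disjoint p r)
  (hqr : cyl_disjoint q r).

Lemma cycle3_comm : inVcomm (cycle3 p q r).
Proof.
exact: (inVcomm_mul (inVcomm_id X) (swap_inV hpq x0) (swap_inV hpr x0)
  (swapK hpq) (swapK hpq) (swapK hpr) (swapK hpr)).
Qed.

Lemma cycle3_inv : cancel (fun y => swap p r (swap p q (swap p r (swap p q y))))
  (cycle3 p q r).
Proof. by move=> y; rewrite /cycle3 !(swapK hpq, swapK hpr). Qed.

Lemma cycle3_p w : cycle3 p q r (cat_inf p w) = cat_inf q w.
Proof.
have cr := cyl_cat_inf_self r w.
rewrite /cycle3 swap_p (@swap_out _ p q (cat_inf r w)) ?(swap_q hpr) ?swap_p //.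
  exact: (cyl_disjoint_notin (cyl_disjoint_sym hpr)).
exact: (cyl_disjoint_notin (cyl_disjoint_sym hqr)).
Qed.

Lemma cycle3_q w : cycle3 p q r (cat_inf q w) = cat_inf r w.
Proof.
have cq := cyl_cat_inf_self q w; have cr := cyl_cat_inf_self r w.
rewrite /cycle3 (@swap_out _ p r (cat_inf q w)) ?(swap_q hpq) ?swap_p.
  rewrite (@swap_out _ p q (cat_inf r w)) //.
    exact: (cyl_disjoint_notin (cyl_disjoint_sym hpr)).
  exact: (cyl_disjoint_notin (cyl_disjoint_sym hqr)).
  exact: (cyl_disjoint_notin (cyl_disjoint_sym hpq)).
exact: (cyl_disjoint_notin hqr).
Qed.

Lemma cycle3_r w : cycle3 p q r (cat_inf r w) = cat_inf p w.
Proof.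
have cq := cyl_cat_inf_self q w.
rewrite /cycle3 (swap_q hpr) swap_p (@swap_out _ p r (cat_inf q w)) ?(swap_q hpq) //.
  exact: (cyl_disjoint_notin (cyl_disjoint_sym hpq)).
exact: (cyl_disjoint_notin hqr).
Qed.

Lemma cycle3_out x : ~ cyl p x -> ~ cyl q x -> ~ cyl r x -> cycle3 p q r x = x.
Proof.
by move=> h1 h2 h3; rewrite /cycle3 !(@swap_out _ p r) // !(@swap_out _ p q).
Qed.

Lemma comm_orbit_move_cyl S S' :
  (forall x, cyl p x -> S x) -> (forall x, cyl q x -> ~ S x) ->
  (forall x, cyl r x -> ~ S x) ->
  (forall x, S' x <-> (S x /\ ~ cyl p x) \/ cyl q x) ->
  comm_orbit S S'.
Proof.
move=> Sp Sq Sr hS'; apply: (comm_orbit_preimage cycle3_comm cycle3_inv) => x.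
rewrite hS'; case: (classic (cyl p x)) => [/cyl_split ->|np].
  rewrite cycle3_p; split=> _; [exact/Sp/cyl_cat_inf_self | right].
  exact: cyl_cat_inf_self.
case: (classic (cyl q x)) => [/cyl_split ->|nq].
  have cr := cyl_cat_inf_self r (shift (size q) x).
  rewrite cycle3_q; split=> [[[/Sr] //|]|/Sq].
    by move/(cyl_disjoint_notin (cyl_disjoint_sym hqr)).
  by move=> /(_ (cyl_cat_inf_self _ _)).
case: (classic (cyl r x)) => [/cyl_split ->|nr].
  have cp := cyl_cat_inf_self p (shift (size r) x).
  rewrite cycle3_r; split=> [[[_] //|]|/Sr].
    by move/(cyl_disjoint_notin (cyl_disjoint_sym hpq)).
  by move=> /(_ (cyl_cat_inf_self _ _)).
by rewrite cycle3_out //; split=> [[[]|]|] //; left.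
Qed.

End CommutatorOrbits.

Section MoveFamily.
Variable X : finType.
Variable x0 : X.
Local Notation pt := (pt X).
Local Notation comm_orbit := (@comm_orbit X).

(* Disjoint cylinders P 0, ..., P (k-1) are moved one at a time onto disjoint
   cylinders Q 0, ..., Q (k-1), using a spare cylinder r avoiding all of them. *)
Variables (k : nat) (P Q : nat -> seq X) (r : seq X).
Hypotheses
  (hPP : forall j j', j < k -> j' < k -> j <> j' -> cyl_disjoint (P j) (P j'))
  (hQQ : forall j j', j < k -> j' < k -> j <> j' -> cyl_disjoint (Q j) (Q j'))
  (hPQ : forall j j', j < k -> j' < k -> cyl_disjoint (P j) (Q j'))
  (hPr : forall j, j < k -> cyl_disjoint (P j) r)
  (hQr : forall j, j < k -> cyl_disjoint (Q j) r).

(* The state after the first i cylinders have been moved. *)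
Definition moved i (x : pt) : Prop :=
  (exists j, j < i /\ cyl (Q j) x) \/ (exists j, i <= j < k /\ cyl (P j) x).

Lemma moved_succ i x : i < k ->
  moved i.+1 x <-> (moved i x /\ ~ cyl (P i) x) \/ cyl (Q i) x.
Proof.
move=> hi; split.
  case=> [[j [hj c]]|[j [/andP [hj hj'] c]]].
    move: hj; rewrite ltnS leq_eqVlt => /orP [/eqP e|hj]; first by right; rewrite -e.
    left; split; first by left; exists j.
    exact: cyl_disjoint_notin (cyl_disjoint_sym (hPQ hi (ltn_trans hj hi))) c.
  left; split; first by right; exists j; rewrite hj' (ltnW hj).
  apply: cyl_disjoint_notin (hPP hj' hi _) c.
  by move=> e; rewrite e ltnn in hj.
case=> [[[[j [hj c]]|[j [/andP [hj hj'] c]]] np]|cq].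
- by left; exists j; split => //; apply: ltnW.
- right; exists j; rewrite hj' andbT; split => //.
  by move: hj; rewrite leq_eqVlt => /orP [/eqP e|//]; rewrite -e in c.
- by left; exists i.
Qed.

Lemma moved_step i : i < k -> comm_orbit (moved i) (moved i.+1).
Proof.
move=> hi; apply: (comm_orbit_move_cyl x0 (hPQ hi hi) (hPr hi) (hQr hi)).
- by move=> x c; right; exists i; rewrite leqnn hi.
- move=> x cq [[j [hj c]]|[j [/andP [hj hj'] c]]].
    apply: cyl_disjoint_notin (hQQ (ltn_trans hj hi) hi _) c cq.
    by move=> e; rewrite e ltnn in hj.
  exact: cyl_disjoint_notin (hPQ hj' hi) c cq.
- move=> x cr [[j [hj c]]|[j [/andP [hj hj'] c]]].
    exact: cyl_disjoint_notin (hQr (ltn_trans hj hi)) c cr.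
  exact: cyl_disjoint_notin (hPr hj') c cr.
- by move=> x; apply: moved_succ.
Qed.

Lemma comm_orbit_move (U : subset_pt X) :
  (forall x, U x <-> exists j, j < k /\ cyl (P j) x) ->
  comm_orbit U (fun x => exists j, j < k /\ cyl (Q j) x).
Proof.
move=> hU.
have H0 : comm_orbit U (moved 0).
  apply: comm_orbit_ext (comm_orbit_refl U) => x; rewrite hU.
  by split=> [h|[[j []]|]] //; right.
have Hk i : i <= k -> comm_orbit U (moved i).
  elim: i => [|i IH] hi //.
  exact: comm_orbit_trans (IH (ltnW hi)) (moved_step hi).
apply: comm_orbit_ext (Hk k (leqnn k)) => x; split=> [|h]; last by left.
by case=> // [[j [/andP [hj hj'] _]]]; rewrite leqNgt hj' in hj.
Qed.

End MoveFamily.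

Section Combs.
Variable X : finType.
Variables (a b : X).
Hypothesis hab : a != b.
Local Notation pt := (pt X).
Local Notation comm_orbit := (@comm_orbit X).
Implicit Types (c : seq X).

(* The j-th tooth c a^j b of the comb with stem c, and the union of the first
   k teeth: the normal form of a clopen set with k pieces. *)
Definition tooth c j := c ++ nseq j a ++ [:: b].
Definition comb c k : subset_pt X := fun x => exists j, j < k /\ cyl (tooth c j) x.

Lemma size_tooth c j : size (tooth c j) = size c + j + 1.
Proof. by rewrite /tooth !size_cat size_nseq addnA. Qed.

Lemma nth_tooth_end c j : nth a (tooth c j) (size c + j) = b.
Proof.
by rewrite /tooth nth_cat ltnNge leq_addr /= addKn nth_cat size_nseq ltnn subnn.
Qed.

Lemma nth_stem_nseq c k j : j < k -> nth a (c ++ nseq k a) (size c + j) = a.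
Proof. by move=> h; rewrite nth_cat ltnNge leq_addr /= addKn nth_nseq h. Qed.

Lemma nth_tooth_lt c j j' : j < j' -> nth a (tooth c j') (size c + j) = a.
Proof.
move=> h; rewrite /tooth catA nth_cat size_cat size_nseq ltn_add2l h.
exact: nth_stem_nseq.
Qed.

Lemma tooth_disjoint c j j' : j <> j' -> cyl_disjoint (tooth c j) (tooth c j').
Proof.
wlog h : j j' / j < j'.
  move=> hw hne; case: (ltngtP j j') => [l|l|e]; first exact: hw l hne.
    by apply: cyl_disjoint_sym; apply: hw l _ => e; apply: hne.
  by rewrite e in hne.
move=> _; apply: (@cyl_disjoint_nth _ _ _ (size c + j) a).
- by rewrite size_tooth addn1.
- by rewrite size_tooth addn1 ltnS leq_add2l ltnW.
- by rewrite nth_tooth_end nth_tooth_lt // eq_sym.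
Qed.

(* The first k teeth avoid the spare cylinder c a^k. *)
Lemma tooth_stem_disjoint c j k : j < k -> cyl_disjoint (tooth c j) (c ++ nseq k a).
Proof.
move=> h; apply: (@cyl_disjoint_nth _ _ _ (size c + j) a).
- by rewrite size_tooth addn1.
- by rewrite size_cat size_nseq ltn_add2l.
- by rewrite nth_tooth_end nth_stem_nseq // eq_sym.
Qed.

Lemma comm_orbit_comb (P : nat -> seq X) k (U : subset_pt X) c :
  (forall x, U x <-> exists j, j < k /\ cyl (P j) x) ->
  (forall j j', j < k -> j' < k -> j <> j' -> cyl_disjoint (P j) (P j')) ->
  (forall j, j < k -> cyl_disjoint (P j) c) ->
  comm_orbit U (comb c k).
Proof.
move=> hU hPP hPc.
have hPcs j s : j < k -> cyl_disjoint (P j) (c ++ s).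
  move=> hj; exact: cyl_disjoint_prefix (hPc j hj) (prefix_refl _) (prefix_prefix _ _).
apply: (comm_orbit_move a (Q := tooth c) (r := c ++ nseq k a) hPP _ _ _ _ hU).
- by move=> j j' _ _; apply: tooth_disjoint.
- by move=> j j' hj _; apply: hPcs.
- by move=> j hj; apply: hPcs.
- by move=> j hj; apply: tooth_stem_disjoint.
Qed.

Lemma decomp_comm_orbit_comb (U : subset_pt X) vs c : decomp U vs ->
  (forall x, cyl c x -> ~ U x) -> comm_orbit U (comb c (size vs)).
Proof.
move=> [hU hD] hc; apply: (comm_orbit_comb (P := fun j => nth [::] vs j)).
- move=> x; rewrite hU; split.
    by move=> [v /(nthP [::]) [j hj <-] hcv]; exists j.
  by move=> [j [hj hcj]]; exists (nth [::] vs j) => //; apply: mem_nth.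
- move=> j j' hj hj' hne x; case: (ltngtP j j') => [l|l|e].
  + by apply: hD; rewrite l.
  + by move=> [h1 h2]; apply: (hD j' j _ x); rewrite ?l.
  + by rewrite e in hne.
- move=> j hj x [h1 h2]; apply: (hc x h2); apply/hU.
  by exists (nth [::] vs j) => //; apply: mem_nth.
Qed.

Lemma comb_disjoint_stems c c' k : cyl_disjoint c c' ->
  comm_orbit (comb c k) (comb c' k).
Proof.
move=> h; apply: (comm_orbit_comb (P := tooth c)) => //.
- by move=> j j' _ _; apply: tooth_disjoint.
- by move=> j _; apply: cyl_disjoint_prefix h (prefix_prefix _ _) (prefix_refl _).
Qed.

(* The stem of a comb can be replaced by any other non-empty word, passing
   through a third stem disjoint from both when the first letters agree. *)
Lemma comb_change_stem c c' k : c != [::] -> c' != [::] ->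
  comm_orbit (comb c k) (comb c' k).
Proof.
case: c => [|h t] // _; case: c' => [|h' t'] // _.
case: (eqVneq h h') => [<-|hne]; last first.
  by apply: comb_disjoint_stems; apply: (@cyl_disjoint_nth _ _ _ 0 a).
pose e := if h == a then b else a.
have he : e != h by rewrite /e; case: (eqVneq h a) => [->|hna]; rewrite eq_sym.
have d1 : cyl_disjoint (h :: t) [:: e].
  by apply: (@cyl_disjoint_nth _ _ _ 0 a) => //=; rewrite eq_sym.
have d2 : cyl_disjoint [:: e] (h :: t').
  exact: (@cyl_disjoint_nth _ _ _ 0 a).
exact: comm_orbit_trans (comb_disjoint_stems k d1) (comb_disjoint_stems k d2).
Qed.

End Combs.

Section Refinement.
Variable X : finType.
Variables (a b : X).
Hypothesis hab : a != b.
Local Notation pt := (pt X).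
Local Notation comm_orbit := (@comm_orbit X).
Local Notation tooth := (tooth a b).
Local Notation comb := (comb a b).

(* Splitting the last tooth of a comb with k teeth into its d one-letter
   extensions gives k - 1 + d disjoint cylinders covering the same set. *)
Variables (c : seq X) (k : nat).
Hypothesis hk : 0 < k.
Local Notation K := k.-1.

Definition letter (t : nat) : X := nth a (enum X) t.
Definition refined (j : nat) : seq X :=
  if j < K then tooth c j else rcons (tooth c K) (letter (j - K)).

Lemma ltn_pred_k : K < k.
Proof. by rewrite prednK. Qed.

Lemma size_last_tooth : size (tooth c K) = size c + k.
Proof. by rewrite size_tooth -addnA addn1 prednK. Qed.

Lemma refined_ge j : K <= j -> refined j = rcons (tooth c K) (letter (j - K)).
Proof. by move=> hj; rewrite /refined ifF //; apply/negbTE; rewrite -leqNgt. Qed.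

Lemma refined_end j :
  size c + minn j K < size (refined j) /\ nth a (refined j) (size c + minn j K) = b.
Proof.
rewrite /refined; case: ifP => hj.
  by rewrite (minn_idPl (ltnW hj)) size_tooth addn1 nth_tooth_end.
rewrite (minn_idPr _); last by rewrite leqNgt hj.
rewrite size_rcons nth_rcons size_last_tooth ltn_add2l ltn_pred_k ltnS.
by rewrite leq_add2l (ltnW ltn_pred_k) nth_tooth_end.
Qed.

Lemma refined_lt j i : i < K -> i < j -> nth a (refined j) (size c + i) = a.
Proof.
move=> hi hij; rewrite /refined; case: ifP => _; first exact: nth_tooth_lt.
by rewrite nth_rcons size_last_tooth ltn_add2l (ltn_trans hi ltn_pred_k) nth_tooth_lt.
Qed.

Lemma refined_letter j : K <= j ->
  size c + k < size (refined j) /\ nth a (refined j) (size c + k) = letter (j - K).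
Proof.
by move=> hj; rewrite refined_ge // size_rcons nth_rcons size_last_tooth ltnn eqxx.
Qed.

Lemma refined_cover x :
  comb c k x <-> exists j, j < K + #|X| /\ cyl (refined j) x.
Proof.
split=> [[j [hj cj]]|[j [hj]]]; last first.
  rewrite /refined; case: ifP => hjK cj.
    by exists j; split => //; apply: ltn_trans hjK ltn_pred_k.
  exists K; split; first exact: ltn_pred_k.
  by apply: cyl_prefix cj; rewrite -cats1; apply: prefix_prefix.
case: (ltnP j K) => hjK.
  by exists j; split; [apply: ltn_addr | rewrite /refined hjK].
have ej : j = K.
  by move: hj; rewrite -{1}(prednK hk) ltnS => hj; apply/eqP; rewrite eqn_leq hj hjK.
rewrite {}ej in cj; set t := index (x (size (tooth c K))) (enum X).
have ht : t < #|X| by rewrite cardE index_mem mem_enum.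
exists (K + t); split; first by rewrite ltn_add2l.
rewrite refined_ge ?leq_addr // addKn; apply: cyl_rcons => //.
by rewrite /letter /t nth_index // mem_enum.
Qed.

Lemma refined_disjoint_lt j j' : j < j' -> j' < K + #|X| ->
  cyl_disjoint (refined j) (refined j').
Proof.
move=> hjj' hj'; case: (ltnP j K) => hjK.
  have [sj nj] := refined_end j; have [sj' _] := refined_end j'.
  rewrite (minn_idPl (ltnW hjK)) in sj nj.
  apply: (@cyl_disjoint_nth _ _ _ (size c + j) a) => //.
    apply: leq_ltn_trans sj'; rewrite leq_add2l leq_min (ltnW hjj').
    exact: ltnW.
  by rewrite nj refined_lt // eq_sym.
have hj'K : K <= j' by apply: leq_trans hjK (ltnW hjj').
have [sj nj] := refined_letter hjK; have [sj' nj'] := refined_letter hj'K.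
apply: (@cyl_disjoint_nth _ _ _ (size c + k) a) => //.
rewrite nj nj' /letter nth_uniq ?enum_uniq // -?cardE.
- by rewrite eqn_sub2rE // neq_ltn hjj'.
- by rewrite ltn_subLR // (ltn_trans hjj' hj').
- by rewrite ltn_subLR.
Qed.

(* ... and avoid the spare cylinder c a^k, the stem of the new comb. *)
Lemma refined_stem_disjoint j : cyl_disjoint (refined j) (c ++ nseq k a).
Proof.
have [sj nj] := refined_end j.
apply: (@cyl_disjoint_nth _ _ _ (size c + minn j K) a) => //.
  rewrite size_cat size_nseq ltn_add2l.
  exact: leq_ltn_trans (geq_minr _ _) ltn_pred_k.
rewrite nj nth_stem_nseq 1?eq_sym //.
exact: leq_ltn_trans (geq_minr _ _) ltn_pred_k.
Qed.

Lemma comb_refine : comm_orbit (comb c k) (comb (c ++ nseq k a) (K + #|X|)).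
Proof.
apply: (comm_orbit_comb hab (P := refined)).
- exact: refined_cover.
- move=> j j' hj hj' hne; case: (ltngtP j j') => [l|l|e].
  + exact: refined_disjoint_lt.
  + by apply: cyl_disjoint_sym; apply: refined_disjoint_lt.
  + by rewrite e in hne.
- by move=> j _; apply: refined_stem_disjoint.
Qed.

End Refinement.

Section CombClassification.
Variable X : finType.
Variables (a b : X).
Hypothesis hab : a != b.
Local Notation comm_orbit := (@comm_orbit X).
Local Notation comb := (comb a b).

(* Refining the last tooth and restoring the stem adds d - 1 teeth. *)
Lemma comb_add_period c k : c != [::] -> 0 < k ->
  comm_orbit (comb c k) (comb c (k + #|X|.-1)).
Proof.
move=> hc hk; have hX : 0 < #|X| by apply/card_gt0P; exists a.
have -> : k + #|X|.-1 = k.-1 + #|X|.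
  by rewrite -{1}(prednK hk) -{2}(prednK hX) addSnnS.
apply: comm_orbit_trans (comb_refine hab c hk) (comb_change_stem hab _ _ _) => //.
by case: c hc.
Qed.

Lemma comb_add_periods m c k : c != [::] -> 0 < k ->
  comm_orbit (comb c k) (comb c (k + m * #|X|.-1)).
Proof.
move=> hc hk; elim: m => [|m IH]; first by rewrite mul0n addn0; apply: comm_orbit_refl.
apply: comm_orbit_trans IH _; rewrite mulSnr addnA.
by apply: comb_add_period => //; apply: leq_trans hk (leq_addr _ _).
Qed.

Lemma clopen_avoids_cylinder (U : subset_pt X) : is_clopen U -> nonempty_proper U ->
  exists2 c, c != [::] & forall y, cyl c y -> ~ U y.
Proof.
move=> [_ hC] [[y hy] [x hx]]; have [n hn] := hC x hx.
exists (mkseq x n); last by move=> z; rewrite /Defs.cyl size_mkseq => /hn.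
by case: n hn => [|n] // hn; case: (hn y erefl hy).
Qed.

Lemma decomp_size_pos (U : subset_pt X) vs : decomp U vs -> (exists x, U x) ->
  0 < size vs.
Proof. by move=> [hU _] [x /hU [v]]; case: (vs). Qed.

Lemma size_mod_comm_orbit_le (U1 U2 : subset_pt X) vs1 vs2 :
  is_clopen U1 -> is_clopen U2 -> nonempty_proper U1 -> nonempty_proper U2 ->
  decomp U1 vs1 -> decomp U2 vs2 -> size vs1 <= size vs2 ->
  size vs1 = size vs2 %[mod #|X|.-1] -> comm_orbit U1 U2.
Proof.
move=> hc1 hc2 hn1 hn2 hd1 hd2 hle hm.
have [c1 hc1' hcc1] := clopen_avoids_cylinder hc1 hn1.
have [c2 hc2' hcc2] := clopen_avoids_cylinder hc2 hn2.
have hdv : #|X|.-1 %| size vs2 - size vs1 by rewrite -eqn_mod_dvd // hm.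
have e : size vs2 = size vs1 + (size vs2 - size vs1) %/ #|X|.-1 * #|X|.-1.
  by rewrite divnK // subnKC.
have r := comb_add_periods ((size vs2 - size vs1) %/ #|X|.-1) hc1'
  (decomp_size_pos hd1 hn1.1).
rewrite -e in r.
apply: comm_orbit_trans (comm_orbit_trans (decomp_comm_orbit_comb hab hd1 hcc1) r) _.
apply: comm_orbit_trans (comb_change_stem hab _ hc1' hc2') _.
exact: comm_orbit_sym (decomp_comm_orbit_comb hab hd2 hcc2).
Qed.

Lemma size_mod_comm_orbit (U1 U2 : subset_pt X) vs1 vs2 :
  is_clopen U1 -> is_clopen U2 -> nonempty_proper U1 -> nonempty_proper U2 ->
  decomp U1 vs1 -> decomp U2 vs2 ->
  size vs1 = size vs2 %[mod #|X|.-1] -> comm_orbit U1 U2.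
Proof.
move=> hc1 hc2 hn1 hn2 hd1 hd2 hm; case: (leqP (size vs1) (size vs2)) => hle.
  exact: size_mod_comm_orbit_le hd1 hd2 hle hm.
by apply: comm_orbit_sym; apply: size_mod_comm_orbit_le hd2 hd1 (ltnW hle) (esym hm).
Qed.

End CombClassification.

Theorem proposition4p5 (X : finType) (hX : 2 <= #|X|) :
  (forall U : subset_pt X, is_clopen U -> exists vs, decomp U vs) /\
  (forall (U : subset_pt X) (vs1 vs2 : seq (seq X)),
      is_clopen U -> decomp U vs1 -> decomp U vs2 ->
      size vs1 = size vs2 %[mod #|X|.-1]) /\
  (forall (U1 U2 : subset_pt X) (vs1 vs2 : seq (seq X)),
      is_clopen U1 -> is_clopen U2 ->
      nonempty_proper U1 -> nonempty_proper U2 ->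
      decomp U1 vs1 -> decomp U2 vs2 ->
      (same_orbit (@inV X) U1 U2 <-> same_orbit (@inVcomm X) U1 U2) /\
      (same_orbit (@inVcomm X) U1 U2 <->
         size vs1 = size vs2 %[mod #|X|.-1])).
Proof.
have [a [b hab]] : exists a b : X, a != b.
  move: hX; rewrite cardE; case E: (enum X) => [|a [|b s]] //= _.
  exists a, b; have := enum_uniq X; rewrite E /= in_cons negb_or.
  by case/andP => /andP [].
split.
  move=> U /clopen_uniform_depth [N hN].
  by exists (level a U N); apply: level_decomp.
split; first by move=> U vs1 vs2 _; apply: decomp_size_mod.
move=> U1 U2 vs1 vs2 hc1 hc2 hn1 hn2 hd1 hd2.
have h21 : same_orbit (@inVcomm X) U1 U2 -> same_orbit (@inV X) U1 U2.
  by move=> [g [hg o]]; exists g; split => //; apply: (inVcomm_inV a hg).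
have h13 := inV_orbit_size_mod a hc1 hd1 hd2.
have h32 := size_mod_comm_orbit hab hc1 hc2 hn1 hn2 hd1 hd2.
split; split.
- by move=> /h13 /h32.
- exact: h21.
- by move=> /h21 /h13.
- exact: h32.
Qed.
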